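(* Let $n\ge2$ and $K\in\mathcal{C}_e^n$. Then $$K=\bigcap_{u\in S^{n-1}}C^{-}(u,c_K(u)).$$ Moreover, for every $x\in\partial K$ there exists $u_0\in S^{n-1}$ with $[x,u_0]=c_K(u_0)$.
   Context: For $x,y\in\mathbb{R}^n$ let $[x,y]=\sqrt{|x|^2|y|^2-(x\cdot y)^2}$. For $u\in S^{n-1}$, $r>0$, $C^{-}(u,r)=\{x\in\mathbb{R}^n:[x,u]\le r\}$ is a closed solid cylinder. $\mathcal{C}_e^n$ is the class of origin-symmetric convex bodies in $\mathbb{R}^n$ that are intersections of closed solid cylinders. For $K\in\mathcal{C}_e^n$, the cylindrical support function is $c_K(x)=\max_{y\in K}[x,y]$, $x\in\mathbb{R}^n$. $\partial K$ denotes the boundary of $K$. *)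

(* R : realType, points of R^n are row vectors 'rV[R]_n
   with the (product = Euclidean) topology from normedtype. *)
From HB Require Import structures.
From mathcomp Require Import all_boot all_order all_algebra.
From mathcomp Require Import all_classical all_reals all_analysis.
Set Implicit Arguments. Unset Strict Implicit. Unset Printing Implicit Defensive.
Import Order.TTheory GRing.Theory Num.Theory.
Import numFieldNormedType.Exports.
Local Open Scope classical_set_scope.
Local Open Scope ring_scope.

Section Cyl.
Variables (R : realType) (n : nat).

Definition dotv (x y : 'rV[R]_n) : R := \sum_(i < n) x ord0 i * y ord0 i.

Definition sphere : set 'rV[R]_n := [set u | dotv u u = 1].

Definition brk (x y : 'rV[R]_n) : R :=
  Num.sqrt (dotv x x * dotv y y - (dotv x y) ^+ 2).

Definition cylinder (u : 'rV[R]_n) (r : R) : set 'rV[R]_n := [set x | brk x u <= r].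

Definition convex_set_Rn (K : set 'rV[R]_n) : Prop :=
  forall x y (t : R), K x -> K y -> 0 <= t <= 1 -> K (t *: x + (1 - t) *: y).

Definition convex_body (K : set 'rV[R]_n) : Prop :=
  compact K /\ convex_set_Rn K /\ interior K !=set0.

Definition origin_symmetric (K : set 'rV[R]_n) : Prop :=
  forall x, K x -> K (- x).

Definition cyl_intersection (K : set 'rV[R]_n) : Prop :=
  exists I : set ('rV[R]_n * R),
    (forall p, I p -> sphere p.1 /\ 0 < p.2) /\
    K = \bigcap_(p in I) cylinder p.1 p.2.

Definition in_Ce (K : set 'rV[R]_n) : Prop :=
  convex_body K /\ origin_symmetric K /\ cyl_intersection K.

(* cylindrical support function c_K(x) = max_{y in K} [x,y]
   (a supremum, attained since K is compact and nonempty) *)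
Definition cyl_supp (K : set 'rV[R]_n) (x : 'rV[R]_n) : R :=
  sup [set brk x y | y in K].

Definition bdry (K : set 'rV[R]_n) : set 'rV[R]_n := closure K `\` interior K.

End Cyl.

From HB Require Import structures.
From mathcomp Require Import all_boot all_order all_algebra.
From mathcomp Require Import all_classical all_reals all_analysis.
Import Order.TTheory GRing.Theory Num.Theory.
Import numFieldNormedType.Exports.
Local Open Scope classical_set_scope.
Local Open Scope ring_scope.

(* For y in K and any u, [u,y] <= c_K(u), and c_K(u) <= r as soon as K lies
   in C^-(u,r); this gives the representation of K.  Being a supremum of
   continuous functions, c_K is lower semicontinuous, while [.,.] is jointly
   continuous; so if [x,u] < c_K(u) for all u in the compact sphere, the tube
   lemma keeps these strict inequalities for all y near x, and x is interior. *)

Section continuity.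
Context {R : realType} {n : nat} {T : topologicalType}.
Implicit Types f g : T -> 'rV[R]_n.

Lemma continuous_dotv f g : continuous f -> continuous g ->
  continuous (fun t => dotv (f t) (g t)).
Proof.
move=> cf cg; apply: (continuous_big (op := +%R)) => [|i _ t].
  exact: add_continuous.
have coord (h : T -> 'rV[R]_n) :
    continuous h -> continuous (fun s => h s ord0 i).
  move=> ch s.
  apply: (@continuous_comp _ _ _ h (fun M : 'rV[R]_n => M ord0 i)).
    exact: ch.
  exact: coord_continuous.
exact: continuousM (coord _ cf t) (coord _ cg t).
Qed.

Lemma continuous_brk f g : continuous f -> continuous g ->
  continuous (fun t => brk (f t) (g t)).
Proof.
move=> cf cg t; rewrite /brk.
under eq_fun do rewrite expr2.
apply: (@continuous_comp _ _ _
  (fun s => dotv (f s) (f s) * dotv (g s) (g s)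
            - dotv (f s) (g s) * dotv (f s) (g s))
  Num.sqrt); last exact: sqrt_continuous.
by apply: continuousB; apply: continuousM; apply: continuous_dotv.
Qed.

End continuity.

Lemma brkC {R : realType} {n : nat} (x y : 'rV[R]_n) : brk x y = brk y x.
Proof.
have dotvC a b : dotv a b = dotv b a by apply: eq_bigr => i _; rewrite mulrC.
by rewrite /brk dotvC mulrC.
Qed.

Lemma continuous_brkr {R : realType} {n : nat} (u : 'rV[R]_n) :
  continuous (brk u).
Proof.
exact: (@continuous_brk R n _ (fun=> u) id (@cst_continuous _ _ u)
  (fun y => @cvg_id _ (nbhs y))).
Qed.

Lemma continuous_brkl {R : realType} {n : nat} (y : 'rV[R]_n) :
  continuous (fun v => brk v y).
Proof.
have -> : (fun v => brk v y) = brk y by apply/funext => u; exact: brkC.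
exact: continuous_brkr.
Qed.

Section sphere.
Context {R : realType} {n : nat}.

Lemma sphere_norm_le1 (u : 'rV[R]_n) : sphere u -> `|u| <= 1.
Proof.
move=> su; rewrite /Num.Def.normr /= mx_normrE.
apply/bigmax_leP; split=> // -[i j] _ /=; rewrite (ord1 i).
rewrite -(@expr_le1 _ 2) // real_normK ?num_real // -su /dotv (bigD1 j) //=.
by rewrite expr2 lerDl; apply: sumr_ge0 => k _; rewrite -expr2 sqr_ge0.
Qed.

Lemma compact_sphere : compact (@sphere R n).
Proof.
apply: bounded_closed_compact.
  exists 1; split; first exact: num_real.
  by move=> M M1 u /sphere_norm_le1 /le_trans; apply; exact: ltW.
apply: (@preimage_closed _ _ (fun u => dotv u u) [set 1]).
  move=> u _; exact: (@continuous_dotv R n _ id id (fun u => cvg_id)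
                                                    (fun u => cvg_id)).
exact: closed_eq.
Qed.

End sphere.

Section cylindrical_support.
Context {R : realType} {n : nat} (K : set 'rV[R]_n).
Hypotheses (K_compact : compact K) (K_neq0 : K !=set0).

Lemma has_sup_brk u : has_sup [set brk u y | y in K].
Proof.
apply: compact_has_sup; first by case: K_neq0 => y Ky; exists (brk u y), y.
apply: continuous_compact K_compact; apply: continuous_subspaceT.
exact: continuous_brkr.
Qed.

Lemma brk_le_cyl_supp u y : K y -> brk u y <= cyl_supp K u.
Proof. by move=> Ky; apply: ub_le_sup; [exact: (has_sup_brk u).2|exists y]. Qed.

Lemma cyl_supp_le u r : (forall y, K y -> brk u y <= r) -> cyl_supp K u <= r.
Proof.
move=> le_r; apply: ge_sup; first exact: (has_sup_brk u).1.
by move=> _ [y Ky <-]; exact: le_r.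
Qed.

Lemma near_lt_cyl_supp u t :
  t < cyl_supp K u -> \forall v \near u, t < cyl_supp K v.
Proof.
case/(sup_gt (has_sup_brk u).1) => _ [y Ky <-] t_lt.
near=> v; apply: lt_le_trans (brk_le_cyl_supp v y Ky).
by near: v; exact: (cvgr_gt _ (continuous_brkl y u) _ t_lt).
Unshelve. all: by end_near. Qed.

Lemma cyl_intersection_hullE : cyl_intersection K ->
  K = \bigcap_(u in @sphere R n) cylinder u (cyl_supp K u).
Proof.
move=> [I [I_sphere KI]]; apply/seteqP; split=> [y Ky u _ | y y_in].
  by rewrite /cylinder /= brkC; exact: brk_le_cyl_supp.
have K_cyl p z : I p -> K z -> brk z p.1 <= p.2.
  by move=> Ip; rewrite KI => /(_ p Ip).
rewrite KI => p Ip; apply: le_trans (y_in _ (I_sphere p Ip).1) _.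
by apply: cyl_supp_le => z /(K_cyl p _ Ip); rewrite brkC.
Qed.

Lemma near_brk_lt_cyl_supp x :
  (forall u, sphere u -> brk x u < cyl_supp K u) ->
  \forall y \near x, forall u, sphere u -> brk y u < cyl_supp K u.
Proof.
move=> x_lt.
apply: ((compact_near_coveringP _).1 (@compact_sphere R n) _ (nbhs x)
  (fun y u => brk y u < cyl_supp K u)) => u /x_lt /midf_lt [xt tK].
set t := _ / 2 in xt tK.
have near_t : \forall p \near (u, x), brk p.2 p.1 < t.
  have brk_cont :
      continuous (fun p : 'rV[R]_n * 'rV[R]_n => brk p.2 p.1).
    by apply: continuous_brk => p; [exact: cvg_snd|exact: cvg_fst].
  exact: (cvgr_lt _ (brk_cont (u, x)) _ xt).
have [[U V] [/= Uu Vx] UV] := near_t.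
exists (U `&` [set v | t < cyl_supp K v], V).
  by split=> //=; apply: filterI => //; exact: near_lt_cyl_supp.
by case=> v y [[Uv tv] Vy] /=; apply: lt_trans tv; exact: (UV (v, y)).
Qed.

Lemma bdry_brk_eq_cyl_supp x : cyl_intersection K -> bdry K x ->
  exists u, sphere u /\ brk x u = cyl_supp K u.
Proof.
move=> /cyl_intersection_hullE K_hull [clKx Kx_int].
have Kx : K x by rewrite (closure_id K).1 //; exact: compact_closed.
apply: contrapT => no_eq; apply: Kx_int.
have x_lt u : sphere u -> brk x u < cyl_supp K u.
  move=> su; rewrite lt_neqAle brkC brk_le_cyl_supp // andbT brkC.
  by apply/eqP => eq_u; apply: no_eq; exists u.
rewrite /interior /= K_hull.
by apply: filterS (near_brk_lt_cyl_supp _ x_lt) => y y_lt u /y_lt /ltW.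
Qed.

End cylindrical_support.

Theorem proposition3p7 (R : realType) (n : nat) (hn : (2 <= n)%N)
    (K : set 'rV[R]_n) (hK : in_Ce K) :
  K = \bigcap_(u in sphere (R:=R) (n:=n)) cylinder u (cyl_supp K u) /\
  (forall x, bdry K x ->
     exists u0, sphere u0 /\ brk x u0 = cyl_supp K u0).
Proof.
case: hK => [[K_compact [_ [x /interior_subset Kx]]] [_ K_cyl]].
have K_neq0 : K !=set0 by exists x.
split=> [|y]; first exact: cyl_intersection_hullE.
exact: bdry_brk_eq_cyl_supp.
Qed.
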